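(* Let $a,b,c,d\in\mathbb{C}\setminus\{0\}$ and let $s$ be the polynomial vector field on $\mathbb{A}^2$ associated to the Lotka–Volterra system \[ X'=X(aY+b),\qquad Y'=Y(cX+d). \] If $b\neq d$, the only irreducible invariant curves of $s$ defined over $\mathbb{C}$ are $X=0$ and $Y=0$. If $b=d$, the only irreducible invariant curves of $s$ defined over $\mathbb{C}$ are $X=0$, $Y=0$ and $cX-aY=0$.
   Context: For $P\in\mathbb{C}[X,Y]$, the Lie derivative along $s$ is $\mathcal{L}_s(P)=X(aY+b)\,\partial P/\partial X+Y(cX+d)\,\partial P/\partial Y$. A nonzero polynomial $P$ is invariant if $P$ divides $\mathcal{L}_s(P)$; an (irreducible) invariant curve over $\mathbb{C}$ is the zero set of an (irreducible) invariant polynomial $P\in\mathbb{C}[X,Y]$. *)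

From HB Require Import structures.
From mathcomp Require Import all_boot all_order all_algebra.
From mathcomp Require Import complex.
From mathcomp Require Import reals.
Set Implicit Arguments. Unset Strict Implicit. Unset Printing Implicit Defensive.
Import Order.TTheory GRing.Theory Num.Theory.
Local Open Scope ring_scope.

(* Bivariate polynomials C[X,Y] are represented as {poly {poly C}}: the
   inner polynomial variable is X, the outer one is Y. *)
Section LV.
Variable R : realType.
Local Notation C := (R[i]).
Local Notation Poly2 := ({poly {poly C}}).

Definition varX : Poly2 := ('X : {poly C})%:P.
Definition varY : Poly2 := 'X.
Definition cst2 (k : C) : Poly2 := k%:P%:P.

Definition dX (P : Poly2) : Poly2 := map_poly (fun q : {poly C} => q^`()) P.
Definition dY (P : Poly2) : Poly2 := P^`().

Definition eval2 (P : Poly2) (x y : C) : C := (P.[y%:P]).[x].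

Definition lie (a b c d : C) (P : Poly2) : Poly2 :=
  varX * (cst2 a * varY + cst2 b) * dX P + varY * (cst2 c * varX + cst2 d) * dY P.

Definition invariant (a b c d : C) (P : Poly2) : Prop :=
  P != 0 /\ exists Q : Poly2, lie a b c d P = Q * P.

Definition irreducible2 (P : Poly2) : Prop :=
  P != 0 /\ ~ (P \is a GRing.unit) /\
  forall Q S : Poly2, P = Q * S -> Q \is a GRing.unit \/ S \is a GRing.unit.

Definition irr_inv_curve (a b c d : C) (S : C * C -> Prop) : Prop :=
  exists P : Poly2, irreducible2 P /\ invariant a b c d P /\
    forall p : C * C, S p <-> eval2 P p.1 p.2 = 0.
End LV.

(* Let P be irreducible with lie P = K P.  If Y or X divides P, then P is Y or
   X up to a constant.  Otherwise the restrictions of lie P = K P to Y = 0, to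
   X = 0 (via the symmetry X <-> Y, (a,b,c,d) <-> (c,d,a,b)) and to the top
   Y-coefficient are equations q p = k X p' with p != 0, which force q to be
   constant; hence the cofactor K is a constant g.  In the coefficient
   recurrence of lie P = g P, the term a X Y dX P confines the support of P to
   i + j <= m (m the Y-degree), and c X Y dY P carries the nonzero coefficient
   of X^0 Y^m along the whole antidiagonal i + j = m.  Its two corners give
   g = d m = b m, and m > 0 since P is not a unit, so b = d.  Then P is
   homogeneous of degree m, Euler's identity turns lie P = b m P into
   a dX P + c dY P = 0, and a m P = (cX - aY) (- dY P) exhibits the line. *)

From Pilot Require Import Defs.
From HB Require Import structures.
From mathcomp Require Import all_boot all_order all_algebra.
From mathcomp Require Import complex reals.
From mathcomp Require Import ring zify.
Set Implicit Arguments. Unset Strict Implicit. Unset Printing Implicit Defensive.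
Import Order.TTheory GRing.Theory Num.Theory.
Local Open Scope ring_scope.

Section XDeriv.
Variable R : nzRingType.
Implicit Types p : {poly R}.

Lemma coefX_deriv p i : ('X * p^`())`_i = p`_i *+ i.
Proof. by rewrite coefXM; case: i => [|i] //=; rewrite coef_deriv. Qed.

Lemma size_X_deriv p : (size ('X * p^`())%R <= size p)%N.
Proof. by apply/leq_sizeP => i hi; rewrite coefX_deriv nth_default ?mul0rn. Qed.

Lemma mulX_drop_poly1 p : p`_0 = 0 -> p = 'X * drop_poly 1 p.
Proof.
move=> p0; apply/polyP => i; rewrite coefXM coef_drop_poly addn1.
by case: i => [|i].
Qed.

End XDeriv.

Section IdomainSize.
Variable R : idomainType.
Implicit Types p q : {poly R}.

Lemma size_mul_leq_cancel p q n :
  p != 0 -> (size (q * p)%R <= size p + n)%N -> (size q <= n.+1)%N.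
Proof.
move=> p0; have [->|q0] := eqVneq q 0; first by rewrite size_poly0.
by rewrite size_mul //; rewrite -size_poly_gt0 in p0; lia.
Qed.

Lemma size_le1_X_deriv k p q :
  p != 0 -> q * p = k%:P * ('X * p^`()) -> (size q <= 1)%N.
Proof.
move=> p0 qp; apply: (size_mul_leq_cancel (n := 0) p0).
by rewrite qp mul_polyC addn0 (leq_trans (size_scale_leq _ _)) ?size_X_deriv.
Qed.

End IdomainSize.

Section LotkaVolterra.
Variable R : realType.
Local Notation C := R[i].
Local Notation Poly2 := {poly {poly C}}.
Implicit Types (P Q S K U F D : Poly2) (a b c d g k : C).

Lemma coef_dX P j : (dX P)`_j = (P`_j)^`().
Proof. by rewrite coef_map_id0 ?deriv0. Qed.

Lemma coef_dY P j : (dY P)`_j = P`_j.+1 *+ j.+1.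
Proof. exact: coef_deriv. Qed.

Lemma lie_expand a b c d P : lie a b c d P =
  cst2 a * (varY R * (varX R * dX P)) + cst2 b * (varX R * dX P)
  + cst2 c * (varX R * (varY R * dY P)) + cst2 d * (varY R * dY P).
Proof. by rewrite /lie; ring. Qed.

Lemma coef0_lie a b c d P : (lie a b c d P)`_0 = b%:P * ('X * (P`_0)^`()).
Proof.
by rewrite lie_expand !coefD !coefCM /varY !coefXM coef_dX !mulr0 !addr0 add0r.
Qed.

Lemma coefS_lie a b c d P j : (lie a b c d P)`_j.+1 =
  a%:P * ('X * (P`_j)^`()) + b%:P * ('X * (P`_j.+1)^`())
  + (c%:P * 'X + d%:P) * P`_j.+1 *+ j.+1.
Proof.
rewrite lie_expand !coefD !coefCM /varY !coefXM /= !coefCM !coef_dX coef_dY.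
by rewrite !mulrnAr -[in LHS]addrA -mulrnDl mulrDl !mulrA.
Qed.

Lemma size_lie a b c d P : (size (lie a b c d P) <= (size P).+1)%N.
Proof.
apply/leq_sizeP => -[|j] // hj.
by rewrite coefS_lie !nth_default ?deriv0 ?mulr0 ?mul0rn ?addr0 // ltnW.
Qed.

Lemma swapXY_dX P : swapXY (dX P) = dY (swapXY P).
Proof.
apply/polyP => i; apply/polyP => j.
by rewrite coef_swapXY coef_dX coef_dY coef_deriv coefMn coef_swapXY.
Qed.

Lemma swapXY_dY P : swapXY (dY P) = dX (swapXY P).
Proof. by rewrite -{1}[P]swapXYK -swapXY_dX swapXYK. Qed.

Lemma swapXY_cst2 k : swapXY (cst2 k) = cst2 k.
Proof. by rewrite swapXY_polyC map_polyC. Qed.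

Lemma swapXY_varX : swapXY (varX R) = varY R.
Proof. by rewrite swapXY_polyC map_polyX. Qed.

Lemma swapXY_varY : swapXY (varY R) = varX R.
Proof. exact: swapXY_X. Qed.

Lemma swapXY_lie a b c d P : swapXY (lie a b c d P) = lie c d a b (swapXY P).
Proof.
rewrite /lie !rmorphD !rmorphM /= !rmorphD !rmorphM /= swapXY_dX swapXY_dY.
by rewrite !swapXY_cst2 swapXY_varX swapXY_varY addrC.
Qed.

Lemma dXB P Q : dX (P - Q) = dX P - dX Q.
Proof. by apply/polyP => j; rewrite coefB !coef_dX coefB derivB. Qed.

Lemma dX_cst2M k P : dX (cst2 k * P) = cst2 k * dX P.
Proof. by apply/polyP => j; rewrite !coefCM !coef_dX coefCM !mul_polyC derivZ. Qed.

Lemma dY_cst2M k P : dY (cst2 k * P) = cst2 k * dY P.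
Proof. by rewrite /dY !mul_polyC derivZ. Qed.

Lemma dX_varX : dX (varX R) = 1.
Proof.
apply/polyP => j; rewrite coef_dX coef1 /varX coefC.
by case: j => [|j]; rewrite ?derivX ?deriv0.
Qed.

Lemma dX_varY : dX (varY R) = 0.
Proof.
apply/polyP => j; rewrite coef_dX coef0 coefX.
by case: (j == 1)%N; rewrite ?(derivC 1) ?deriv0.
Qed.

Lemma dY_varX : dY (varX R) = 0.
Proof. exact: derivC. Qed.

Lemma dY_varY : dY (varY R) = 1.
Proof. by rewrite /dY /varY derivX. Qed.

Lemma cst2M k1 k2 : cst2 (k1 * k2) = cst2 k1 * cst2 k2 :> Poly2.
Proof. by rewrite /cst2 !polyCM. Qed.

Definition lvline a c : Poly2 := cst2 c * varX R - cst2 a * varY R.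

Lemma lie_varX a b c d : lie a b c d (varX R) = (cst2 a * varY R + cst2 b) * varX R.
Proof. by rewrite /lie dX_varX dY_varX; ring. Qed.

Lemma lie_varY a b c d : lie a b c d (varY R) = (cst2 c * varX R + cst2 d) * varY R.
Proof. by rewrite /lie dX_varY dY_varY; ring. Qed.

Lemma lie_lvline a b c : lie a b c b (lvline a c) = cst2 b * lvline a c.
Proof.
rewrite /lie /lvline dXB !dX_cst2M dX_varX dX_varY /dY derivB.
rewrite -!/(dY _) !dY_cst2M dY_varX dY_varY; ring.
Qed.

Lemma cofactor_size a b c d P K :
  P != 0 -> lie a b c d P = K * P -> (size K <= 2)%N.
Proof.
move=> P0 hK; apply: (size_mul_leq_cancel (n := 1) P0).
by rewrite -hK addn1 size_lie.
Qed.

Lemma cofactor_coef0 a b c d P K :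
  P`_0 != 0 -> lie a b c d P = K * P -> (size (K`_0)%R <= 1)%N.
Proof.
move=> P00 hK; apply: (size_le1_X_deriv (k := b) P00).
by rewrite -coef0M -hK coef0_lie.
Qed.

Lemma cofactor_coef1 a b c d P K :
  P != 0 -> lie a b c d P = K * P -> (size (K`_1)%R <= 1)%N.
Proof.
move=> P0 hK; have sK := cofactor_size P0 hK.
have [sK1|sK2] := ltnP (size K) 2; first by rewrite nth_default ?size_poly0.
have {}sK2 : size K = 2 by apply/eqP; rewrite eqn_leq sK sK2.
have K0 : K != 0 by rewrite -size_poly_eq0 sK2.
have lP0 : lead_coef P != 0 by rewrite lead_coef_eq0.
apply: (size_le1_X_deriv (k := a) lP0).
have -> : K`_1 = lead_coef K by rewrite lead_coefE sK2.
rewrite -lead_coefM -hK lead_coefE hK size_mul // sK2 add2n /= -hK.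
rewrite (polySpred P0) coefS_lie -(polySpred P0) (nth_default _ (leqnn _)).
by rewrite deriv0 !mulr0 mul0rn !addr0 -lead_coefE.
Qed.

Lemma cofactor_const a b c d P K :
  P != 0 -> P`_0 != 0 -> (swapXY P)`_0 != 0 -> lie a b c d P = K * P ->
  K = cst2 K`_0`_0.
Proof.
move=> P0 P00 P00' hK.
have hKs : lie c d a b (swapXY P) = swapXY K * swapXY P.
  by rewrite -swapXY_lie hK rmorphM.
(* The coefficient of Y in K is that of X in K(0, Y), constant by symmetry. *)
have K1 : K`_1 = 0.
  rewrite (size1_polyC (cofactor_coef1 P0 hK)) -coef_swapXY.
  by rewrite nth_default ?polyC0 // (cofactor_coef0 P00' hKs).
apply/polyP => -[|[|j]]; rewrite /cst2 coefC //=.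
  exact: size1_polyC (cofactor_coef0 P00 hK).
by rewrite nth_default // (leq_trans (cofactor_size P0 hK)).
Qed.

(* [P`_j`_i] is the coefficient of X^i Y^j. *)
Definition homogeneous2 (n : nat) P := forall i j, (i + j != n)%N -> P`_j`_i = 0.

Section Eigenpolynomial.
Variables (a b c d g : C) (P : Poly2).
Hypothesis hlie : lie a b c d P = cst2 g * P.

Lemma eigen_coef_rec i j :
  (b * i.+1%:R + d * j.+1%:R) * P`_j.+1`_i.+1 + a * i.+1%:R * P`_j`_i.+1
  + c * j.+1%:R * P`_j.+1`_i = g * P`_j.+1`_i.+1.
Proof.
have E : (lie a b c d P)`_j.+1`_i.+1 = (cst2 g * P)`_j.+1`_i.+1 by rewrite hlie.
rewrite coefS_lie !coefD coefMn !coefCM mulrDl coefD -[c%:P * _ * _]mulrA !coefCM in E.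
rewrite !coefX_deriv coefXM /= in E.
by rewrite -E; ring.
Qed.

Lemma eigen_coef_col0 j : d * j%:R * P`_j`_0 = g * P`_j`_0.
Proof.
have E : (lie a b c d P)`_j`_0 = (cst2 g * P)`_j`_0 by rewrite hlie.
rewrite /cst2 !coefCM in E; rewrite -E {E}.
case: j => [|j]; first by rewrite coef0_lie coefCM coefX_deriv !mulr0 mul0r.
rewrite coefS_lie !coefD coefMn !coefCM mulrDl coefD -[c%:P * _ * _]mulrA !coefCM.
by rewrite !coefX_deriv coefXM /=; ring.
Qed.

Lemma eigen_coef_row0 i : b * i%:R * P`_0`_i = g * P`_0`_i.
Proof.
have E : (lie a b c d P)`_0`_i = (cst2 g * P)`_0`_i by rewrite hlie.
rewrite /cst2 !coefCM in E; rewrite -E.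
by rewrite coef0_lie coefCM coefX_deriv; ring.
Qed.

Local Notation m := (size P).-1.
Hypothesis ha : a != 0.

Lemma eigen_coef_eq0 i j : (size P <= i + j)%N -> P`_j`_i = 0.
Proof.
(* Downward induction on j, via the recurrence at X^(i+1) Y^(j+1). *)
move Ek: (size P - j)%N => k; elim: k i j Ek => [|k IH] i j Ek hij.
  by move/eqP: Ek; rewrite subn_eq0 => /(nth_default 0) ->; rewrite coef0.
have [hj|hj] := leqP (size P) j; first by rewrite (nth_default 0 hj) coef0.
case: i hij => [|i] hij; first lia.
have := eigen_coef_rec i j; rewrite (IH i.+1 j.+1) ?(IH i j.+1); try lia.
rewrite !mulr0 addr0 add0r => /eqP; rewrite !mulf_eq0 (negbTE ha) pnatr_eq0 /=.
exact/eqP.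
Qed.

Lemma eigen_const : m = 0%N -> P = cst2 P`_0`_0.
Proof.
move=> m0; have sP : (size P <= 1)%N by lia.
have sP0 : (size (P`_0)%R <= 1)%N.
  by apply/leq_sizeP => -[|i] // _; apply: eigen_coef_eq0; lia.
by rewrite {1}(size1_polyC sP) {1}(size1_polyC sP0).
Qed.

Hypothesis hc : c != 0.

Lemma eigen_coef_antidiag n :
  P != 0 -> (n <= m)%N -> P`_(m - n)`_n != 0.
Proof.
move=> P0; elim: n => [|n IH] hn.
  rewrite subn0; apply: contra P0 => /eqP Pm0; rewrite -lead_coef_eq0 lead_coefE.
  apply/eqP/polyP => -[|i]; rewrite coef0 // eigen_coef_eq0 //.
  by rewrite addSnnS (leq_trans (leqSpred _)) ?leq_addl.
have Em : (m - n = (m - n.+1).+1)%N by lia.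
have := eigen_coef_rec n (m - n.+1); rewrite -Em (eigen_coef_eq0 (i := n.+1)); last lia.
rewrite !mulr0 add0r => /eqP; rewrite addr_eq0 => /eqP Erec.
have := IH (ltnW hn); apply: contra => /eqP pn0.
move: Erec; rewrite pn0 mulr0 => /esym/eqP.
by rewrite oppr_eq0 !mulf_eq0 (negbTE hc) pnatr_eq0 subn_eq0 leqNgt hn.
Qed.

Lemma eigen_value_d : P != 0 -> g = d * m%:R.
Proof.
move=> P0; have := eigen_coef_antidiag P0 (leq0n m); rewrite subn0 => p0.
by apply/esym/(mulIf p0); exact: eigen_coef_col0.
Qed.

Lemma eigen_value_b : P != 0 -> g = b * m%:R.
Proof.
move=> P0; have := eigen_coef_antidiag P0 (leqnn m); rewrite subnn => p0.
by apply/esym/(mulIf p0); exact: eigen_coef_row0.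
Qed.

Hypothesis hd : d != 0.

Lemma eigen_homogeneous : b = d -> P != 0 -> homogeneous2 m P.
Proof.
move=> bd P0; have gm := eigen_value_d P0.
have off_deg n x : (n != m)%N -> d * n%:R * x = g * x -> x = 0.
  move=> nm; rewrite gm => /eqP; rewrite -subr_eq0 -mulrBl -mulrBr.
  by rewrite !mulf_eq0 (negbTE hd) subr_eq0 eqr_nat (negbTE nm) => /eqP.
have col0 j : (j < m)%N -> P`_j`_0 = 0.
  by move=> hj; apply: off_deg (eigen_coef_col0 j); rewrite ltn_eqF.
have row0 i : (i < m)%N -> P`_0`_i = 0.
  by move=> hi; apply: (off_deg i); rewrite ?ltn_eqF // -bd eigen_coef_row0.
(* Below the antidiagonal the diagonal factor d (i + j - m) is invertible. *)
suff low n i j : (i + j <= n)%N -> (i + j < m)%N -> P`_j`_i = 0.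
  move=> i j; rewrite neq_ltn => /orP[hlow|hhigh]; first exact: (low _ _ _ (leqnn _)).
  by apply: eigen_coef_eq0; rewrite (leq_trans (leqSpred _)).
elim: n i j => [|n IH] [|i] [|j] hn hm; rewrite ?col0 ?row0 //; try lia.
have := eigen_coef_rec i j; rewrite (IH i.+1 j) ?(IH i j.+1) //; try lia.
rewrite !mulr0 !addr0 bd -mulrDr -natrD => E; apply: (off_deg _ _ _ E); lia.
Qed.

End Eigenpolynomial.

Lemma euler_homogeneous (n : nat) P :
  homogeneous2 n P -> varX R * dX P + varY R * dY P = cst2 n%:R * P.
Proof.
move=> hP; apply/polyP => j; apply/polyP => i.
rewrite coefD !coefCM coefD coef_dX coefX_deriv /varY /dY coefX_deriv coefMn.
have [<-|nij] := eqVneq (i + j)%N n; first by rewrite -mulrnDr mulr_natl.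
by rewrite hP // !mul0rn mulr0 addr0.
Qed.

Lemma homogeneous_eigen_factor a b c (n : nat) P :
  homogeneous2 n P -> lie a b c b P = cst2 (b * n%:R) * P ->
  P * cst2 (a * n%:R) = lvline a c * - dY P.
Proof.
move=> hP hlie; have euler := euler_homogeneous hP.
have XY0 : varX R * varY R != 0.
  by rewrite mulf_neq0 // /varX /varY ?polyC_eq0 polyX_eq0.
have : varX R * varY R * (cst2 a * dX P + cst2 c * dY P) = 0.
  apply: (addrI (cst2 b * (varX R * dX P + varY R * dY P))).
  rewrite addr0 {2}euler mulrA -cst2M -hlie /lie; ring.
move/eqP; rewrite mulf_eq0 (negbTE XY0) addr_eq0 => /eqP haX.
transitivity (varX R * (cst2 a * dX P) + cst2 a * varY R * dY P).
  by rewrite cst2M mulrC -[LHS]mulrA -euler; ring.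
by rewrite haX /lvline; ring.
Qed.

Lemma unit_cst2 U : U \is a GRing.unit -> exists2 k, k != 0 & U = cst2 k.
Proof.
rewrite poly_unitE => /andP[/eqP sU]; rewrite poly_unitE => /andP[/eqP sU0 hu].
exists U`_0`_0; first by rewrite -unitfE.
by rewrite {1}(size1_polyC (eq_leq sU)) {1}(size1_polyC (eq_leq sU0)).
Qed.

Lemma cst2_unit k : k != 0 -> cst2 k \is a GRing.unit.
Proof.
move=> k0; rewrite /cst2 poly_unitE size_polyC polyC_eq0 k0 coefC /=.
by rewrite poly_unitE size_polyC k0 coefC unitfE.
Qed.

Lemma irreducible2_associate P F D : irreducible2 P -> irreducible2 F ->
  P = F * D -> exists2 k, k != 0 & P = F * cst2 k.
Proof.
move=> [_ [_ hirr]] [_ [Fu _]] hP; have [//|hu] := hirr F D hP.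
by have [k k0 hD] := unit_cst2 hu; exists k; rewrite // hP hD.
Qed.

Lemma irreducible2_swapXY P : irreducible2 P -> irreducible2 (swapXY P).
Proof.
have unitXY Q : Q \is a GRing.unit -> swapXY Q \is a GRing.unit.
  by case/unit_cst2 => k k0 ->; rewrite swapXY_cst2 cst2_unit.
move=> [P0 [Pu hirr]]; split; first by rewrite swapXY_eq0.
split; first by move=> /unitXY; rewrite swapXYK.
move=> Q S /(congr1 swapXY); rewrite swapXYK rmorphM => /hirr.
by case=> /unitXY; rewrite swapXYK; [left|right].
Qed.

Lemma irreducible2_linear P :
  size P = 2 -> P`_1 \is a GRing.unit -> irreducible2 P.
Proof.
move=> sP hu; split; first by rewrite -size_poly_eq0 sP.
split; first by rewrite poly_unitE sP.
have const_unit Q S : size Q = 1 -> P = Q * S -> Q \is a GRing.unit.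
  move=> sQ hP; rewrite poly_unitE sQ /=; move: hu.
  by rewrite hP {1}(size1_polyC (eq_leq sQ)) coefCM unitrM => /andP[].
move=> Q S hP.
have Q0 : Q != 0 by apply: contra_eq_neq sP => Q0; rewrite hP Q0 mul0r size_poly0.
have S0 : S != 0 by apply: contra_eq_neq sP => S0; rewrite hP S0 mulr0 size_poly0.
have : (size Q + size S = 3)%N.
  move: sP; rewrite hP size_mul // => /(congr1 succn).
  by rewrite prednK // addn_gt0 size_poly_gt0 Q0.
rewrite -!size_poly_gt0 in Q0 S0 => sQS.
have [sQ|sQ] := eqVneq (size Q) 1%N; first by left; exact: const_unit sQ hP.
by right; apply: (const_unit S Q); [lia | rewrite mulrC].
Qed.

Lemma irreducible2_varY : irreducible2 (varY R).
Proof. by apply: irreducible2_linear; rewrite /varY ?size_polyX // coefX unitr1. Qed.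

Lemma irreducible2_varX : irreducible2 (varX R).
Proof. by rewrite -swapXY_varY; apply/irreducible2_swapXY/irreducible2_varY. Qed.

Lemma irreducible2_lvline a c : a != 0 -> irreducible2 (lvline a c).
Proof.
move=> a0; have -> : lvline a c = cst2 (- a) * 'X + (c%:P * 'X)%:P.
  by rewrite /lvline /cst2 /varX /varY polyCN polyCN polyCM; ring.
apply: irreducible2_linear.
  rewrite size_MXaddC /cst2 !polyC_eq0 oppr_eq0 (negbTE a0).
  by rewrite size_polyC polyC_eq0 oppr_eq0 a0.
rewrite coefD coefMX !coefC /= addr0 poly_unitE size_polyC oppr_eq0 a0 coefC /=.
by rewrite unitfE oppr_eq0.
Qed.

Lemma invariant_varX a b c d : Defs.invariant a b c d (varX R).
Proof.
split; first by case: irreducible2_varX.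
by exists (cst2 a * varY R + cst2 b); exact: lie_varX.
Qed.

Lemma invariant_varY a b c d : Defs.invariant a b c d (varY R).
Proof.
split; first by case: irreducible2_varY.
by exists (cst2 c * varX R + cst2 d); exact: lie_varY.
Qed.

Lemma invariant_lvline a b c : a != 0 -> Defs.invariant a b c b (lvline a c).
Proof.
move=> a0; split; first by case: (irreducible2_lvline c a0).
by exists (cst2 b); exact: lie_lvline.
Qed.

Lemma eval2M P Q x y : eval2 (P * Q) x y = eval2 P x y * eval2 Q x y.
Proof. by rewrite /eval2 !hornerM. Qed.

Lemma eval2_cst2 k x y : eval2 (cst2 k) x y = k.
Proof. by rewrite /eval2 /cst2 !hornerC. Qed.

Lemma eval2_varX x y : eval2 (varX R) x y = x.
Proof. by rewrite /eval2 /varX hornerC hornerX. Qed.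

Lemma eval2_varY x y : eval2 (varY R) x y = y.
Proof. by rewrite /eval2 /varY hornerX hornerC. Qed.

Lemma eval2_lvline a c x y : eval2 (lvline a c) x y = c * x - a * y.
Proof. by rewrite /eval2 /lvline /cst2 /varX /varY !hornerE. Qed.

Lemma eval2_mulC_eq0 F k x y :
  k != 0 -> eval2 (F * cst2 k) x y = 0 <-> eval2 F x y = 0.
Proof.
move=> k0; rewrite eval2M eval2_cst2; split => [/eqP|->]; last by rewrite mul0r.
by rewrite mulf_eq0 (negbTE k0) orbF => /eqP.
Qed.

Lemma irreducible_eigen_lvline a b c d g P :
  a != 0 -> c != 0 -> d != 0 -> irreducible2 P -> lie a b c d P = cst2 g * P ->
  b = d /\ exists2 k, k != 0 & P = lvline a c * cst2 k.
Proof.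
move=> ha hc hd hirr hK; have P0 : P != 0 by case: hirr.
have [m0|m0] := eqVneq (size P).-1 0%N.
  have Pc := eigen_const hK ha m0; case: hirr => _ [+ _]; case.
  rewrite Pc cst2_unit //; apply: contra_neq P0 => p0.
  by rewrite Pc p0 /cst2 !polyC0.
have bd : b = d.
  have := eigen_value_d hK ha hc P0; rewrite (eigen_value_b hK ha hc P0).
  by apply: mulIf; rewrite pnatr_eq0.
subst d; split => //; have hom := eigen_homogeneous hK ha hc hd erefl P0.
have hKb := hK; rewrite {1}(eigen_value_b hK ha hc P0) in hKb.
have hfac := homogeneous_eigen_factor hom hKb.
have am0 : a * (size P).-1%:R != 0 by rewrite mulf_neq0 // pnatr_eq0.
apply: (irreducible2_associate (D := cst2 (a * (size P).-1%:R)^-1 * - dY P) hirr).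
  exact: irreducible2_lvline.
apply: (mulIf (_ : cst2 (a * (size P).-1%:R) != 0)); first by rewrite /cst2 !polyC_eq0.
rewrite hfac -mulrA [_ * - dY P * _]mulrAC -cst2M mulVf //.
by rewrite /cst2 !polyC1 mul1r.
Qed.

Lemma irreducible_invariant_cases a b c d P :
  a != 0 -> c != 0 -> d != 0 -> irreducible2 P -> Defs.invariant a b c d P ->
  [\/ exists2 k, k != 0 & P = varX R * cst2 k,
      exists2 k, k != 0 & P = varY R * cst2 k
    | b = d /\ exists2 k, k != 0 & P = lvline a c * cst2 k].
Proof.
move=> ha hc hd hirr [P0 [K hK]].
have [P00|P00] := eqVneq P`_0 0.
  exact/Or32/(irreducible2_associate hirr irreducible2_varY)/mulX_drop_poly1.
have [Q00|Q00] := eqVneq (swapXY P)`_0 0.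
  apply/Or31/(irreducible2_associate (D := swapXY (drop_poly 1 (swapXY P))) hirr).
    exact: irreducible2_varX.
  by rewrite -[LHS]swapXYK {1}(mulX_drop_poly1 Q00) rmorphM /= swapXY_X.
apply/Or33/(irreducible_eigen_lvline ha hc hd hirr (g := K`_0`_0)).
by rewrite -(cofactor_const P0 P00 Q00 hK).
Qed.

Lemma irr_inv_curve_iff a b c d (S : C * C -> Prop) :
  a != 0 -> c != 0 -> d != 0 ->
  irr_inv_curve a b c d S <->
  [\/ forall p, S p <-> p.1 = 0, forall p, S p <-> p.2 = 0
    | b = d /\ forall p, S p <-> c * p.1 - a * p.2 = 0].
Proof.
move=> ha hc hd; split.
  case=> P [hirr [hinv hS]].
  case: (irreducible_invariant_cases ha hc hd hirr hinv)
    => [[k k0 hP]|[k k0 hP]|[bd [k k0 hP]]].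
  - by apply: Or31 => p; rewrite hS hP eval2_mulC_eq0 // eval2_varX.
  - by apply: Or32 => p; rewrite hS hP eval2_mulC_eq0 // eval2_varY.
  - by apply: Or33; split => // p; rewrite hS hP eval2_mulC_eq0 // eval2_lvline.
case=> [hS|hS|[<- hS]].
- exists (varX R); split; first exact: irreducible2_varX.
  by split; [exact: invariant_varX | move=> p; rewrite hS eval2_varX].
- exists (varY R); split; first exact: irreducible2_varY.
  by split; [exact: invariant_varY | move=> p; rewrite hS eval2_varY].
- exists (lvline a c); split; first exact: irreducible2_lvline.
  by split; [exact: invariant_lvline | move=> p; rewrite hS eval2_lvline].
Qed.

End LotkaVolterra.

Theorem mainTheorem6 (R : realType) (a b c d : R[i])
  (ha : a != 0) (hb : b != 0) (hc : c != 0) (hd : d != 0) :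
  (b != d ->
    forall S : R[i] * R[i] -> Prop,
      irr_inv_curve a b c d S <->
        ((forall p, S p <-> p.1 = 0) \/ (forall p, S p <-> p.2 = 0))) /\
  (b = d ->
    forall S : R[i] * R[i] -> Prop,
      irr_inv_curve a b c d S <->
        [\/ (forall p, S p <-> p.1 = 0), (forall p, S p <-> p.2 = 0)
          | (forall p, S p <-> c * p.1 - a * p.2 = 0)]).
Proof.
split=> hbd S; rewrite irr_inv_curve_iff //.
  split=> [[hS|hS|[bd _]]|[hS|hS]]; try by [left | right | apply: Or31 | apply: Or32].
  by rewrite bd eqxx in hbd.
by split=> [[hS|hS|[_ hS]]|[hS|hS|hS]]; by [apply: Or31 | apply: Or32 | apply: Or33].
Qed.
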